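(* Let $a,b>0$. As $q\to1-0$, $$\log\big\{(q^a:q^{a+b})_\infty\,(q^b:q^{a+b})_\infty\big\}=\frac{\pi^2}{3(a+b)\log q}+\log\Big\{2\sin\Big(\frac{a}{a+b}\pi\Big)\Big\}+O(\log q).$$
   Context: For $0<q<1$ and $c,d>0$, $(q^c:q^d)_\infty=\prod_{r=0}^{\infty}(1-q^{c+dr})$. *)

From Stdlib Require Import Reals.
From Coquelicot Require Import Coquelicot.
Open Scope R_scope.

Fixpoint qpoch_partial (q c d : R) (N : nat) : R :=
  match N with
  | O => 1
  | S n => qpoch_partial q c d n * (1 - Rpower q (c + d * INR n))
  end.

(* (q^c : q^d)_oo = prod_{r>=0} (1 - q^(c + d r)), as the limit of partial products. *)
Definition qpoch_inf (q c d : R) : R :=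
  real (Lim_seq (fun N => qpoch_partial q c d N)).

From Stdlib Require Import Reals Lra Lia.
From Coquelicot Require Import Coquelicot.
Open Scope R_scope.

(* Put q = exp (- x / (a + b)) and l(v) = ln (1 - exp (- v)).  The logarithm of the product
   is F(a / (a + b), x), where F(b, x) = sum_n [l (x (n + b)) + l (x (n + 1 - b))], and the
   claim is that R(b, x) = F(b, x) - ln (2 sin (b PI)) + PI^2 / (3 x) is O(x) as x -> 0.
   Splitting n into even and odd and using sin (2 t) = 2 sin t cos t gives the duplication
   formula R(b, x) = R(b / 2, 2 x) + R((b + 1) / 2, 2 x), and R(1 - b, x) = R(b, x).
   For x in [1, 2] the second derivative of R(., x) is bounded on (0, 1): the poles of
   l(x t) and l(x (1 - t)) at the ends cancel those of ln sin.  Through duplication, the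
   second differences of R(., x / 2^j) are 2^j times smaller; with the symmetry this gives
   R(b, x) - R(1/2, x) = O(x), hence R(1/2, x) - 2 R(1/2, 2 x) = O(x), and summing this
   recursion gives R(1/2, x) = O(x) as soon as x R(1/2, x) -> 0.  That last limit fixes the
   constant: expanding l in power series and swapping the double sum,
   x F(1/2, x) = - sum_k (2 / k^2) s_k / sinh s_k with s_k = k x / 2, which tends to
   - 2 zeta(2) = - PI^2 / 3. *)

Lemma le_of_is_derive_nonneg (f f' : R -> R) (a b : R) : a <= b ->
  (forall t, a <= t <= b -> is_derive f t (f' t)) ->
  (forall t, a <= t <= b -> 0 <= f' t) -> f a <= f b.
Proof.
  intros Hab Hf Hpos. destruct (Req_dec a b) as [<-|Hne]; [lra|].
  destruct (MVT_cor2 f f' a b) as [c [Hc Hac]]; [lra| |].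
  - intros c Hc. apply is_derive_Reals, Hf, Hc.
  - assert (0 <= f' c) by (apply Hpos; lra). nra.
Qed.

Lemma Rabs_sub_le_of_is_derive (f f' g g' : R -> R) (a b : R) : a <= b ->
  (forall t, a <= t <= b -> is_derive f t (f' t)) ->
  (forall t, a <= t <= b -> is_derive g t (g' t)) ->
  (forall t, a <= t <= b -> Rabs (f' t) <= g' t) ->
  Rabs (f b - f a) <= g b - g a.
Proof.
  intros Hab Hf Hg Hle.
  assert (Hup : g a - f a <= g b - f b).
  { apply (le_of_is_derive_nonneg (fun t => g t - f t) (fun t => g' t - f' t)); auto.
    - intros t Ht. apply (is_derive_minus g f); auto.
    - intros t Ht. specialize (Hle t Ht). apply Rabs_le_between in Hle. lra. }
  assert (Hlow : g a + f a <= g b + f b).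
  { apply (le_of_is_derive_nonneg (fun t => g t + f t) (fun t => g' t + f' t)); auto.
    - intros t Ht. apply (is_derive_plus g f); auto.
    - intros t Ht. specialize (Hle t Ht). apply Rabs_le_between in Hle. lra. }
  apply Rabs_le_between. lra.
Qed.

Lemma Rabs_second_diff_le (f f1 f2 : R -> R) (lo hi K m h : R) :
  (forall t, lo < t < hi -> is_derive f t (f1 t)) ->
  (forall t, lo < t < hi -> is_derive f1 t (f2 t)) ->
  (forall t, lo < t < hi -> Rabs (f2 t) <= K) ->
  0 <= h -> lo < m - h -> m + h < hi ->
  Rabs (f (m + h) + f (m - h) - 2 * f m) <= K * h ^ 2.
Proof.
  intros Hf Hf1 HK Hh Hlo Hhi.
  assert (Hslope : forall t, 0 <= t <= h -> Rabs (f1 (m + t) - f1 (m - t)) <= 2 * K * t).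
  { intros t Ht. replace (2 * K * t) with (K * (m + t) - K * (m - t)) by ring.
    apply (Rabs_sub_le_of_is_derive f1 f2 (fun s => K * s) (fun _ => K)); try lra;
      intros s Hs.
    - apply Hf1; lra.
    - auto_derive; auto; ring.
    - apply HK; lra. }
  assert (Hshift : forall t, 0 <= t <= h ->
    is_derive (fun s => f (m + s) + f (m - s)) t (f1 (m + t) - f1 (m - t))).
  { intros t Ht.
    replace (f1 (m + t) - f1 (m - t)) with (1 * f1 (m + t) + -1 * f1 (m - t)) by ring.
    apply (is_derive_plus (fun s => f (m + s)) (fun s => f (m - s))).
    - apply (is_derive_comp f (fun s => m + s)); [apply Hf; lra | auto_derive; auto].
    - apply (is_derive_comp f (fun s => m - s)); [apply Hf; lra | auto_derive; auto; ring]. }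
  replace (f (m + h) + f (m - h) - 2 * f m)
    with (f (m + h) + f (m - h) - (f (m + 0) + f (m - 0))) by (rewrite Rplus_0_r, Rminus_0_r; ring).
  replace (K * h ^ 2) with (K * h ^ 2 - K * 0 ^ 2) by ring.
  apply (Rabs_sub_le_of_is_derive (fun s => f (m + s) + f (m - s)) (fun t => f1 (m + t) - f1 (m - t))
           (fun s => K * s ^ 2) (fun t => 2 * K * t)); auto.
  intros t Ht. auto_derive; auto; ring.
Qed.

Lemma exp_mul_exp_opp (x : R) : exp x * exp (- x) = 1.
Proof. rewrite <- exp_plus, Rplus_opp_r. apply exp_0. Qed.

Lemma exp_opp_lt_1 (v : R) : 0 < v -> exp (- v) < 1.
Proof. intros Hv. rewrite <- exp_0. apply exp_increasing. lra. Qed.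

Lemma exp_mul_INR (x : R) (n : nat) : exp (x * INR n) = exp x ^ n.
Proof. rewrite <- Rpower_pow by apply exp_pos. unfold Rpower. rewrite ln_exp. f_equal. ring. Qed.

Lemma ln_2_lt_1 : ln 2 < 1.
Proof.
  rewrite <- ln_exp. apply ln_increasing; [lra|]. assert (H := exp_ineq1 1 ltac:(lra)). lra.
Qed.

Lemma is_derive_sinh (t : R) : is_derive sinh t (cosh t).
Proof. apply is_derive_Reals, derivable_pt_lim_sinh. Qed.

Lemma is_derive_cosh (t : R) : is_derive cosh t (sinh t).
Proof. apply is_derive_Reals, derivable_pt_lim_cosh. Qed.

Lemma cosh_ge_1 (t : R) : 1 <= cosh t.
Proof.
  unfold cosh. assert (H1 := exp_ineq1_le t). assert (H2 := exp_ineq1_le (- t)). lra.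
Qed.

Lemma cosh_sqr (t : R) : cosh t ^ 2 = 1 + sinh t ^ 2.
Proof. unfold cosh, sinh. assert (H := exp_mul_exp_opp t). nra. Qed.

Lemma sinh_ge_id (s : R) : 0 <= s -> s <= sinh s.
Proof.
  intros Hs. enough (H : sinh 0 - 0 <= sinh s - s) by (rewrite sinh_0 in H; lra).
  apply (le_of_is_derive_nonneg (fun t => sinh t - t) (fun t => cosh t - 1)); auto; intros t _.
  - apply (is_derive_minus sinh (fun t => t)); [apply is_derive_sinh | auto_derive; auto].
  - assert (H1 := cosh_ge_1 t). lra.
Qed.

Lemma sinh_le_mul_cosh (s : R) : 0 <= s -> sinh s <= s * cosh s.
Proof.
  intros Hs. enough (H : 0 * cosh 0 - sinh 0 <= s * cosh s - sinh s) by (rewrite sinh_0 in H; lra).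
  apply (le_of_is_derive_nonneg (fun t => t * cosh t - sinh t) (fun t => t * sinh t)); auto;
    intros t Ht.
  - replace (t * sinh t) with (1 * cosh t + t * sinh t - cosh t) by ring.
    apply (is_derive_minus (fun t => t * cosh t) sinh); [|apply is_derive_sinh].
    apply (is_derive_mult (fun t => t) cosh); [auto_derive; auto | apply is_derive_cosh | ].
    intros; apply Rmult_comm.
  - assert (H1 := sinh_ge_id t (proj1 Ht)). nra.
Qed.

Lemma inv_sinh_half_sqr_bounds (v : R) : 0 < v ->
  / v ^ 2 - / 4 <= / (2 * sinh (v / 2)) ^ 2 <= / v ^ 2.
Proof.
  intros Hv. set (s := v / 2). replace v with (2 * s) by (unfold s; field).
  assert (Hs : 0 < s) by (unfold s; lra).
  assert (Hge := sinh_ge_id s (Rlt_le _ _ Hs)).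
  assert (Hle := sinh_le_mul_cosh s (Rlt_le _ _ Hs)).
  assert (Hc := cosh_sqr s). assert (Hc1 := cosh_ge_1 s).
  split.
  - destruct (Rle_lt_dec 1 s) as [Hs1 | Hs1].
    + enough (/ (2 * s) ^ 2 <= / 4) by (assert (0 < / (2 * sinh s) ^ 2) by
        (apply Rinv_0_lt_compat, pow_lt; lra); lra).
      apply Rinv_le_contravar; nra.
    + assert (Hk : sinh s ^ 2 * (1 - s ^ 2) <= s ^ 2).
      { assert (sinh s ^ 2 <= s ^ 2 * cosh s ^ 2)
          by (replace (s ^ 2 * cosh s ^ 2) with ((s * cosh s) ^ 2) by ring;
              apply pow_incr; lra).
        nra. }
      apply (Rmult_le_reg_r ((2 * sinh s) ^ 2 * (2 * s) ^ 2)); [apply Rmult_lt_0_compat; apply pow_lt; lra|].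
      replace ((/ (2 * s) ^ 2 - / 4) * ((2 * sinh s) ^ 2 * (2 * s) ^ 2))
        with (4 * (sinh s ^ 2 * (1 - s ^ 2))) by (field; lra).
      replace (/ (2 * sinh s) ^ 2 * ((2 * sinh s) ^ 2 * (2 * s) ^ 2))
        with (4 * s ^ 2) by (field; lra).
      lra.
  - apply Rinv_le_contravar; nra.
Qed.

Lemma one_sub_div_sinh_bounds (s : R) : 0 < s -> 0 <= 1 - s / sinh s <= Rmin 1 s.
Proof.
  intros Hs. assert (Hge := sinh_ge_id s (Rlt_le _ _ Hs)).
  assert (Hle := sinh_le_mul_cosh s (Rlt_le _ _ Hs)).
  assert (Hq : 0 < s / sinh s) by (apply Rdiv_lt_0_compat; lra).
  assert (Hq1 : s / sinh s <= 1)
    by (apply (Rmult_le_reg_r (sinh s)); [lra|]; unfold Rdiv; rewrite Rmult_assoc, Rinv_l; lra).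
  split; [lra|]. apply Rmin_case; [lra|].
  destruct (Rle_lt_dec 1 s) as [Hs1 | Hs1]; [lra|].
  assert (Hcosh : (1 - s) * cosh s <= 1).
  { unfold cosh. assert (H1 := exp_ineq1_le (- s)). assert (H2 := exp_mul_exp_opp s).
    assert (H3 := exp_pos s). assert (H4 := exp_pos (- s)). assert (exp (- s) <= 1) by
      (apply Rlt_le, exp_opp_lt_1, Hs). nra. }
  enough (1 - s <= s / sinh s) by lra.
  apply (Rmult_le_reg_r (sinh s)); [lra|]. unfold Rdiv. rewrite Rmult_assoc, Rinv_l by lra. nra.
Qed.

Lemma sin_le_id (z : R) : 0 <= z -> sin z <= z.
Proof.
  intros Hz. enough (H : 0 - sin 0 <= z - sin z) by (rewrite sin_0 in H; lra).
  apply (le_of_is_derive_nonneg (fun t => t - sin t) (fun t => 1 - cos t)); auto; intros t _.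
  - auto_derive; auto; ring.
  - assert (Hc := COS_bound t). lra.
Qed.

Lemma mul_cos_le_sin (z : R) : 0 <= z <= PI / 2 -> z * cos z <= sin z.
Proof.
  intros Hz. enough (H : sin 0 - 0 * cos 0 <= sin z - z * cos z) by (rewrite sin_0 in H; lra).
  apply (le_of_is_derive_nonneg (fun t => sin t - t * cos t) (fun t => t * sin t)); [lra | |];
    intros t Ht.
  - auto_derive; auto; ring.
  - assert (0 <= sin t) by (apply sin_ge_0; lra). nra.
Qed.

Lemma sub_cube_le_sin (t : R) : 0 <= t <= PI -> t - t ^ 3 / 6 <= sin t.
Proof.
  intros Ht. destruct (sin_bound t 0 (proj1 Ht) (proj2 Ht)) as [H _].
  unfold sin_approx, sin_term in H. simpl in H. lra.
Qed.

Lemma inv_sin_sqr_bounds (z : R) : 0 < z <= PI / 2 ->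
  / z ^ 2 <= / sin z ^ 2 <= / z ^ 2 + 1.
Proof.
  intros Hz.
  assert (Hs : 0 < sin z) by (apply sin_gt_0; lra).
  assert (Hsin := sin_le_id z (Rlt_le _ _ (proj1 Hz))).
  assert (Htan := mul_cos_le_sin z (conj (Rlt_le _ _ (proj1 Hz)) (proj2 Hz))).
  assert (Hcos : 0 <= cos z) by (apply cos_ge_0; lra).
  assert (Hsc := sin2_cos2 z). unfold Rsqr in Hsc.
  split.
  - apply Rinv_le_contravar; [apply pow_lt; lra | apply pow_incr; lra].
  - assert (Hk : z ^ 2 <= sin z ^ 2 * (1 + z ^ 2)).
    { assert ((z * cos z) ^ 2 <= sin z ^ 2) by (apply pow_incr; split; [nra | lra]).
      nra. }
    apply (Rmult_le_reg_r (sin z ^ 2 * z ^ 2)); [apply Rmult_lt_0_compat; apply pow_lt; lra|].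
    replace (/ sin z ^ 2 * (sin z ^ 2 * z ^ 2)) with (z ^ 2) by (field; lra).
    replace ((/ z ^ 2 + 1) * (sin z ^ 2 * z ^ 2)) with (sin z ^ 2 * (1 + z ^ 2)) by (field; lra).
    lra.
Qed.

Lemma sum_n_le_is_series (a : nat -> R) (l : R) (N : nat) :
  (forall n, 0 <= a n) -> is_series a l -> sum_n a N <= l.
Proof.
  intros Ha H. rewrite sum_n_Reals. apply sum_incr; [apply is_series_Reals, H | exact Ha].
Qed.

Lemma is_series_ge0 (a : nat -> R) (l : R) : (forall n, 0 <= a n) -> is_series a l -> 0 <= l.
Proof.
  intros Ha H. apply (Rle_trans _ (sum_n a 0)); [rewrite sum_O; apply Ha |].
  now apply sum_n_le_is_series.
Qed.

Lemma is_lim_seq_sum_n (u : nat -> nat -> R) (l : nat -> R) (K : nat) :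
  (forall k, is_lim_seq (u k) (l k)) -> is_lim_seq (fun N => sum_n (fun k => u k N) K) (sum_n l K).
Proof.
  intros H. induction K as [|K IH].
  - rewrite sum_O. apply (is_lim_seq_ext (u 0%nat)); [intros N; now rewrite sum_O | apply H].
  - rewrite sum_Sn. apply (is_lim_seq_ext (fun N => sum_n (fun k => u k N) K + u (S K) N)).
    + intros N. now rewrite sum_Sn.
    + now apply is_lim_seq_plus'.
Qed.

Lemma sum_n_cols_le (a : nat -> nat -> R) (r c : nat -> R) (l : R) :
  (forall n k, 0 <= a n k) ->
  (forall n, is_series (a n) (r n)) -> (forall k, is_series (fun n => a n k) (c k)) ->
  is_series r l -> forall K, sum_n c K <= l.
Proof.
  intros Ha Hr Hc HS K.
  assert (Hr0 : forall n, 0 <= r n) by (intros n; exact (is_series_ge0 _ _ (Ha n) (Hr n))).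
  assert (Hle : forall N, sum_n (fun k => sum_n (fun n => a n k) N) K <= l).
  { intros N. rewrite <- sum_n_switch, sum_n_Reals.
    apply (Rle_trans _ (sum_f_R0 r N)).
    - apply sum_growing. intros n. now apply sum_n_le_is_series.
    - rewrite <- sum_n_Reals. now apply sum_n_le_is_series. }
  apply (is_lim_seq_le _ (fun _ => l) (sum_n c K) l Hle); [| apply is_lim_seq_const].
  apply is_lim_seq_sum_n. exact Hc.
Qed.

Lemma is_series_swap_nonneg (a : nat -> nat -> R) (r c : nat -> R) (l : R) :
  (forall n k, 0 <= a n k) ->
  (forall n, is_series (a n) (r n)) -> (forall k, is_series (fun n => a n k) (c k)) ->
  is_series r l -> is_series c l.
Proof.
  intros Ha Hr Hc HS.
  assert (Hc0 : forall k, 0 <= c k)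
    by (intros k; exact (is_series_ge0 _ _ (fun n => Ha n k) (Hc k))).
  assert (Hcols := sum_n_cols_le a r c l Ha Hr Hc HS).
  destruct (ex_finite_lim_seq_incr (sum_n c) l) as [Sc HSc]; [|exact Hcols|].
  { intros n. rewrite sum_Sn. specialize (Hc0 (S n)). unfold plus; simpl; lra. }
  assert (Hrows := sum_n_cols_le (fun k n => a n k) c r Sc (fun k n => Ha n k) Hc Hr HSc).
  assert (H1 := is_lim_seq_le _ _ _ _ Hcols HSc (is_lim_seq_const l)).
  assert (H2 := is_lim_seq_le _ _ _ _ Hrows (HS : is_lim_seq (sum_n r) l) (is_lim_seq_const Sc)).
  simpl in H1, H2. replace l with Sc by lra. exact HSc.
Qed.

Lemma is_series_pair_sum (a : nat -> R) (l : R) : is_series a l ->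
  is_series (fun n => a (2 * n)%nat + a (S (2 * n))) l.
Proof.
  intros H.
  assert (Hsum : forall N, sum_n (fun n => a (2 * n)%nat + a (S (2 * n))) N = sum_n a (S (2 * N))).
  { induction N as [|N IH].
    - rewrite sum_O, sum_Sn, sum_O. reflexivity.
    - rewrite sum_Sn, IH. replace (S (2 * S N)) with (S (S (S (2 * N)))) by lia.
      rewrite !sum_Sn. replace (2 * S N)%nat with (S (S (2 * N))) by lia.
      unfold plus; simpl. ring. }
  change (is_lim_seq (sum_n (fun n => a (2 * n)%nat + a (S (2 * n)))) l).
  apply (is_lim_seq_ext (fun N => sum_n a (S (2 * N)))); [intros N; now rewrite Hsum|].
  apply (is_lim_seq_subseq (sum_n a) l (fun N => S (2 * N))); [|exact H].
  intros P [N HN]. exists N. intros n Hn. apply HN. lia.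
Qed.

Lemma is_series_le_head_tail (d b : nat -> R) (c L l : R) (N : nat) :
  (forall k, 0 <= d k <= b k) -> (forall k, d k <= c) -> is_series d L -> is_series b l ->
  L <= INR (S N) * c + (l - sum_n b N).
Proof.
  intros Hdb Hc Hd Hb.
  assert (Exd : ex_series d) by (eexists; exact Hd). assert (Exb : ex_series b) by (eexists; exact Hb).
  rewrite <- (is_series_unique _ _ Hd), <- (is_series_unique _ _ Hb).
  rewrite (Series_incr_n d (S N)), (Series_incr_n b (S N)) by (auto; lia).
  simpl pred. rewrite sum_n_Reals.
  assert (Hhead : sum_f_R0 d N <= INR (S N) * c)
    by (rewrite Rmult_comm, <- sum_cte; apply sum_growing; exact Hc).
  assert (Htail : Series (fun k => d (S N + k)%nat) <= Series (fun k => b (S N + k)%nat))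
    by (apply Series_le; [intros k; apply Hdb | now apply (ex_series_incr_n b (S N))]).
  lra.
Qed.

Lemma is_derive_sum_pow_div (N : nat) (u : R) : u <> 1 ->
  is_derive (fun u => sum_n (fun k => u ^ S k / INR (S k)) N) u ((1 - u ^ S N) / (1 - u)).
Proof.
  intros Hu. induction N as [|N IH].
  - apply (is_derive_ext (fun u => u ^ 1 / INR 1)); [intros t; now rewrite sum_O|].
    auto_derive; auto. simpl. field. lra.
  - apply (is_derive_ext (fun u => sum_n (fun k => u ^ S k / INR (S k)) N + u ^ S (S N) / INR (S (S N))));
      [intros t; now rewrite sum_Sn|].
    assert (HI : INR (S (S N)) <> 0) by (apply not_0_INR; lia).
    replace ((1 - u ^ S (S N)) / (1 - u))
      with ((1 - u ^ S N) / (1 - u) + INR (S (S N)) * u ^ S N / INR (S (S N)))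
      by (cbn [pow]; field; split; [lra | exact HI]).
    apply (is_derive_plus (fun u => sum_n (fun k => u ^ S k / INR (S k)) N)); [exact IH|].
    auto_derive; auto.
    change (match N with 0%nat => 1 | S _ => INR N + 1 end + 1) with (INR (S (S N))).
    cbn [pow]. field. exact HI.
Qed.

Lemma Rabs_ln_sub_sum_pow_div (N : nat) (u : R) : 0 <= u < 1 ->
  Rabs (- ln (1 - u) - sum_n (fun k => u ^ S k / INR (S k)) N) <= u ^ S (S N) / (1 - u).
Proof.
  intros Hu.
  assert (H0 : - ln (1 - 0) - sum_n (fun k => 0 ^ S k / INR (S k)) N = 0).
  { rewrite Rminus_0_r, ln_1, (sum_n_ext _ (fun _ => 0)), sum_n_const.
    - unfold Rdiv. simpl. ring.
    - intros k. simpl. unfold Rdiv. ring. }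
  rewrite <- (Rminus_0_r (- ln (1 - u) - _)), <- H0.
  replace (u ^ S (S N) / (1 - u)) with (u * (u ^ S N / (1 - u)) - 0 * (u ^ S N / (1 - u)))
    by (simpl; field; lra).
  apply (Rabs_sub_le_of_is_derive (fun t => - ln (1 - t) - sum_n (fun k => t ^ S k / INR (S k)) N)
           (fun t => t ^ S N / (1 - t)) (fun t => t * (u ^ S N / (1 - u))) (fun _ => u ^ S N / (1 - u)));
    try lra; intros t Ht.
  - replace (t ^ S N / (1 - t)) with (/ (1 - t) - (1 - t ^ S N) / (1 - t)) by (field; lra).
    apply (is_derive_minus (fun t => - ln (1 - t))); [auto_derive; [lra | field; lra]|].
    apply is_derive_sum_pow_div. lra.
  - auto_derive; auto. cbn [pow]. ring.
  - rewrite Rabs_pos_eq by (apply Rdiv_le_0_compat; [apply pow_le|]; lra).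
    apply (Rle_trans _ (u ^ S N / (1 - t))).
    + apply Rmult_le_compat_r; [apply Rlt_le, Rinv_0_lt_compat; lra | apply pow_incr; lra].
    + apply Rmult_le_compat_l; [apply pow_le; lra | apply Rinv_le_contravar; lra].
Qed.

Lemma is_series_ln_1_sub (u : R) : 0 <= u < 1 ->
  is_series (fun k => u ^ S k / INR (S k)) (- ln (1 - u)).
Proof.
  intros Hu.
  change (is_lim_seq (sum_n (fun k => u ^ S k / INR (S k))) (- ln (1 - u))).
  assert (Hgeom : is_lim_seq (fun N => u ^ 2 / (1 - u) * u ^ N) 0).
  { replace (Finite 0) with (Rbar_mult (u ^ 2 / (1 - u)) 0) by (simpl; f_equal; ring).
    apply is_lim_seq_scal_l, is_lim_seq_geom. rewrite Rabs_pos_eq; lra. }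
  apply (is_lim_seq_le_le (fun N => - ln (1 - u) - u ^ 2 / (1 - u) * u ^ N) _
           (fun N => - ln (1 - u) + u ^ 2 / (1 - u) * u ^ N)).
  - intros N. assert (H := Rabs_ln_sub_sum_pow_div N u Hu). apply Rabs_le_between in H.
    replace (u ^ 2 / (1 - u) * u ^ N) with (u ^ S (S N) / (1 - u)) by (simpl; field; lra). lra.
  - replace (Finite (- ln (1 - u))) with (Finite (- ln (1 - u) - 0)) by (f_equal; ring).
    apply is_lim_seq_minus'; [apply is_lim_seq_const | exact Hgeom].
  - replace (Finite (- ln (1 - u))) with (Finite (- ln (1 - u) + 0)) by (f_equal; ring).
    apply is_lim_seq_plus'; [apply is_lim_seq_const | exact Hgeom].
Qed.

Lemma is_lim_seq_div_pow2 (y : R) : is_lim_seq (fun k => y / 2 ^ k) 0.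
Proof.
  apply (is_lim_seq_ext (fun k => y * (/ 2) ^ k)); [intros k; unfold Rdiv; now rewrite pow_inv|].
  replace (Finite 0) with (Rbar_mult y 0) by (simpl; f_equal; ring).
  apply is_lim_seq_scal_l, is_lim_seq_geom. rewrite Rabs_pos_eq; lra.
Qed.

Lemma Rabs_le_of_geom_diff (v : nat -> R) (c r : R) : 0 <= r < 1 ->
  (forall k, Rabs (v (S k) - v k) <= c * r ^ k) -> is_lim_seq v 0 ->
  forall j, Rabs (v j) <= c * r ^ j / (1 - r).
Proof.
  intros Hr Hv Hlim j.
  assert (Hpart : forall n, Rabs (v j - v (n + j)%nat) <= c * r ^ j * (1 - r ^ n) / (1 - r)).
  { induction n as [|n IH].
    { simpl. replace (v j - v j) with 0 by ring. rewrite Rabs_R0.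
      replace (c * r ^ j * (1 - 1) / (1 - r)) with 0 by (field; lra). lra. }
    replace (v j - v (S n + j)%nat) with ((v j - v (n + j)%nat) - (v (S (n + j)) - v (n + j)%nat)) by
      (simpl; ring).
    eapply Rle_trans; [apply Rabs_triang|]. rewrite Rabs_Ropp.
    specialize (Hv (n + j)%nat). rewrite pow_add in Hv.
    replace (c * r ^ j * (1 - r ^ S n) / (1 - r))
      with (c * r ^ j * (1 - r ^ n) / (1 - r) + c * (r ^ n * r ^ j))
      by (simpl; field; lra).
    lra. }
  assert (Habs : is_lim_seq (fun n => Rabs (v j - v (n + j)%nat)) (Rabs (v j))).
  { replace (Rabs (v j)) with (Rabs (v j - 0)) by (now rewrite Rminus_0_r).
    apply (is_lim_seq_abs _ (Finite (v j - 0))), is_lim_seq_minus'; [apply is_lim_seq_const|].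
    now apply is_lim_seq_incr_n. }
  assert (Hc : 0 <= c).
  { apply (Rle_trans _ (Rabs (v 1%nat - v 0%nat))); [apply Rabs_pos|].
    specialize (Hv 0%nat). simpl in Hv. lra. }
  assert (Hbound : forall n, Rabs (v j - v (n + j)%nat) <= c * r ^ j / (1 - r)).
  { intros n. eapply Rle_trans; [apply Hpart|].
    assert (0 <= r ^ n) by (apply pow_le; lra).
    assert (0 <= c * r ^ j) by (apply Rmult_le_pos; [lra | apply pow_le; lra]).
    unfold Rdiv. apply Rmult_le_compat_r; [apply Rlt_le, Rinv_0_lt_compat; lra|]. nra. }
  exact (is_lim_seq_le _ _ _ _ Hbound Habs (is_lim_seq_const _)).
Qed.

Lemma exists_pow2_scale (x : R) : 0 < x <= 2 -> exists (j : nat) (y : R), 1 <= y <= 2 /\ x = y / 2 ^ j.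
Proof.
  intros Hx.
  assert (Hind : forall n : nat, forall x, 0 < x <= 2 -> 2 / 2 ^ n < x ->
                   exists (j : nat) (y : R), 1 <= y <= 2 /\ x = y / 2 ^ j).
  { induction n as [|n IH]; intros z Hz Hn; [simpl in Hn; lra|].
    destruct (Rle_lt_dec 1 z) as [Hz1 | Hz1]; [exists 0%nat, z; split; [lra | simpl; field]|].
    assert (Hp := pow_lt 2 n ltac:(lra)).
    destruct (IH (2 * z)) as [j [y [Hy Hj]]]; [lra | |].
    - simpl in Hn. unfold Rdiv in *. rewrite Rinv_mult in Hn. lra.
    - exists (S j), y. split; [exact Hy|]. simpl. unfold Rdiv in *. rewrite Rinv_mult. lra. }
  assert (Hlim := is_lim_seq_div_pow2 2). apply is_lim_seq_spec in Hlim.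
  destruct (Hlim (mkposreal x (proj1 Hx))) as [N HN].
  apply (Hind N); [exact Hx|]. specialize (HN N (le_n N)). simpl in HN.
  apply Rabs_lt_between in HN. lra.
Qed.

(** * The Basel sum *)

Lemma is_RInt_derive_eq (F f : R -> R) (a b : R) :
  (forall t, is_derive F t (f t)) -> (forall t, continuous f t) -> F a = F b ->
  is_RInt f a b 0.
Proof.
  intros HF Hf Hab. replace 0 with (F b - F a) by (rewrite Hab; ring).
  apply (is_RInt_derive (V := R_CompleteNormedModule)); auto.
Qed.

Lemma is_RInt_unique_R (f : R -> R) (a b l1 l2 : R) :
  is_RInt f a b l1 -> is_RInt f a b l2 -> l1 = l2.
Proof.
  intros H1 H2. rewrite <- (is_RInt_unique (V := R_CompleteNormedModule) f a b l1 H1).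
  exact (is_RInt_unique (V := R_CompleteNormedModule) f a b l2 H2).
Qed.

Lemma is_RInt_lin2 (f g : R -> R) (a b If Ig c d : R) :
  is_RInt f a b If -> is_RInt g a b Ig -> is_RInt (fun t => c * f t - d * g t) a b (c * If - d * Ig).
Proof.
  intros Hf Hg.
  apply (is_RInt_minus (V := R_NormedModule)); apply (is_RInt_scal (V := R_NormedModule)); assumption.
Qed.

Definition wallis (n : nat) : R := RInt (fun t => cos t ^ (2 * n)) 0 (PI / 2).

Definition wallis_sqr (n : nat) : R := RInt (fun t => t ^ 2 * cos t ^ (2 * n)) 0 (PI / 2).

Lemma is_RInt_wallis (n : nat) : is_RInt (fun t => cos t ^ (2 * n)) 0 (PI / 2) (wallis n).
Proof.
  apply (RInt_correct (V := R_CompleteNormedModule)), (ex_RInt_continuous (V := R_CompleteNormedModule)).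
  intros t _. apply (ex_derive_continuous (V := R_NormedModule)). auto_derive; auto.
Qed.

Lemma is_RInt_wallis_sqr (n : nat) :
  is_RInt (fun t => t ^ 2 * cos t ^ (2 * n)) 0 (PI / 2) (wallis_sqr n).
Proof.
  apply (RInt_correct (V := R_CompleteNormedModule)), (ex_RInt_continuous (V := R_CompleteNormedModule)).
  intros t _. apply (ex_derive_continuous (V := R_NormedModule)). auto_derive; auto.
Qed.

Lemma is_RInt_cos_pow_parts (m : nat) :
  is_RInt (fun t => (INR m + 2) * cos t ^ S (S m) - (INR m + 1) * cos t ^ m) 0 (PI / 2) 0.
Proof.
  apply (is_RInt_derive_eq (fun t => cos t ^ S m * sin t)).
  - intros t. assert (Hsc := sin2_cos2 t). unfold Rsqr in Hsc.
    auto_derive; auto.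
    change (match m with 0%nat => 1 | S _ => INR m + 1 end) with (INR (S m)). rewrite S_INR.
    transitivity ((INR m + 2) * cos t ^ S (S m)
                  - (INR m + 1) * cos t ^ m * (sin t * sin t + cos t * cos t)); [simpl; ring|].
    rewrite Hsc. ring.
  - intros t. apply (ex_derive_continuous (V := R_NormedModule)). auto_derive; auto.
  - rewrite sin_0, cos_PI2. simpl. ring.
Qed.

Lemma is_RInt_sqr_cos_pow_parts (m : nat) :
  is_RInt (fun t => cos t ^ S (S m) + ((INR m + 2) ^ 2 / 2 * (t ^ 2 * cos t ^ S (S m))
                                      - (INR m + 2) * (INR m + 1) / 2 * (t ^ 2 * cos t ^ m)))
    0 (PI / 2) 0.
Proof.
  apply (is_RInt_derive_eq
           (fun t => t * cos t ^ S (S m) + (INR m + 2) / 2 * (t ^ 2 * sin t * cos t ^ S m))).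
  - intros t. assert (Hsc := sin2_cos2 t). unfold Rsqr in Hsc.
    auto_derive; auto.
    change (match m with 0%nat => 1 | S _ => INR m + 1 end) with (INR (S m)). rewrite S_INR.
    transitivity (cos t ^ S (S m) + ((INR m + 2) ^ 2 / 2 * (t ^ 2 * cos t ^ S (S m))
      - (INR m + 2) * (INR m + 1) / 2 * (t ^ 2 * cos t ^ m) * (sin t * sin t + cos t * cos t)));
      [simpl; field|].
    rewrite Hsc. ring.
  - intros t. apply (ex_derive_continuous (V := R_NormedModule)). auto_derive; auto.
  - rewrite cos_PI2. simpl. ring.
Qed.

Lemma wallis_rec (n : nat) : (2 * INR n + 2) * wallis (S n) = (2 * INR n + 1) * wallis n.
Proof.
  assert (H := is_RInt_cos_pow_parts (2 * n)).
  replace (S (S (2 * n))) with (2 * S n)%nat in H by lia.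
  assert (E := is_RInt_unique_R _ _ _ _ _ H
                 (is_RInt_lin2 _ _ _ _ _ _ (INR (2 * n) + 2) (INR (2 * n) + 1)
                    (is_RInt_wallis (S n)) (is_RInt_wallis n))).
  rewrite mult_INR in E. simpl (INR 2) in E. lra.
Qed.

Lemma wallis_sqr_rec (n : nat) :
  wallis (S n) + 2 * (INR n + 1) ^ 2 * wallis_sqr (S n) = (INR n + 1) * (2 * INR n + 1) * wallis_sqr n.
Proof.
  assert (H := is_RInt_sqr_cos_pow_parts (2 * n)).
  replace (S (S (2 * n))) with (2 * S n)%nat in H by lia.
  assert (E := is_RInt_unique_R _ _ _ _ _ H
    (is_RInt_plus (V := R_NormedModule) _ _ _ _ _ _ (is_RInt_wallis (S n))
       (is_RInt_lin2 _ _ _ _ _ _ ((INR (2 * n) + 2) ^ 2 / 2) ((INR (2 * n) + 2) * (INR (2 * n) + 1) / 2)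
          (is_RInt_wallis_sqr (S n)) (is_RInt_wallis_sqr n)))).
  change (plus ?x ?y) with (x + y) in E. rewrite mult_INR in E. simpl (INR 2) in E. lra.
Qed.

Lemma wallis_0 : wallis 0 = PI / 2.
Proof.
  assert (H : is_RInt (fun t => cos t ^ (2 * 0)) 0 (PI / 2) (PI / 2 - 0)).
  { apply (is_RInt_derive (V := R_CompleteNormedModule) (fun t => t)); intros t _.
    - auto_derive; auto.
    - apply continuous_const. }
  rewrite (is_RInt_unique_R _ _ _ _ _ (is_RInt_wallis 0) H). ring.
Qed.

Lemma wallis_sqr_0 : wallis_sqr 0 = (PI / 2) ^ 3 / 3.
Proof.
  assert (H : is_RInt (fun t => t ^ 2 * cos t ^ (2 * 0)) 0 (PI / 2) ((PI / 2) ^ 3 / 3 - 0 ^ 3 / 3)).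
  { apply (is_RInt_derive (V := R_CompleteNormedModule) (fun t => t ^ 3 / 3)); intros t _.
    - auto_derive; auto. simpl. field.
    - apply (ex_derive_continuous (V := R_NormedModule)). auto_derive; auto. }
  rewrite (is_RInt_unique_R _ _ _ _ _ (is_RInt_wallis_sqr 0) H). field.
Qed.

Lemma wallis_pos (n : nat) : 0 < wallis n.
Proof.
  induction n as [|n IH].
  - rewrite wallis_0. assert (HP := PI_RGT_0). lra.
  - assert (H := wallis_rec n). assert (HI := pos_INR n).
    apply (Rmult_lt_reg_l (2 * INR n + 2)); [lra|]. rewrite H. nra.
Qed.

Lemma sqr_le_9_sin_sqr (t : R) : 0 <= t <= PI / 2 -> t ^ 2 <= 9 * sin t ^ 2.
Proof.
  intros Ht. assert (HP := PI_4).
  assert (Hs := sub_cube_le_sin t ltac:(lra)).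
  assert (t / 3 <= sin t) by nra.
  assert ((t / 3) ^ 2 <= sin t ^ 2) by (apply pow_incr; lra).
  lra.
Qed.

Lemma wallis_sqr_bounds (n : nat) : 0 <= wallis_sqr n <= 9 * (wallis n - wallis (S n)).
Proof.
  assert (HP := PI_RGT_0).
  assert (Hcos : forall t, 0 <= cos t ^ (2 * n)) by (intros t; rewrite pow_mult; apply pow_le, pow2_ge_0).
  split.
  - apply (is_RInt_ge_0 _ 0 (PI / 2) _ ltac:(lra) (is_RInt_wallis_sqr n)).
    intros t _. specialize (Hcos t). nra.
  - replace (9 * (wallis n - wallis (S n))) with (9 * wallis n - 9 * wallis (S n)) by ring.
    apply (is_RInt_le _ _ 0 (PI / 2) _ _ ltac:(lra) (is_RInt_wallis_sqr n)
             (is_RInt_lin2 _ _ _ _ _ _ 9 9 (is_RInt_wallis n) (is_RInt_wallis (S n)))).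
    intros t Ht.
    assert (Hsin := sqr_le_9_sin_sqr t ltac:(lra)).
    assert (Hsc := sin2_cos2 t). unfold Rsqr in Hsc. specialize (Hcos t).
    replace (cos t ^ (2 * S n)) with (cos t ^ (2 * n) * (cos t * cos t))
      by (replace (2 * S n)%nat with (2 * n + 2)%nat by lia; rewrite pow_add; simpl; ring).
    nra.
Qed.

(* Matsuoka's proof of zeta(2) = PI^2 / 6: the quotient [2 B_n / A_n] of the integrals of
   [t^2 cos^(2n) t] and [cos^(2n) t] over [0, PI/2] starts at PI^2 / 6, drops by exactly
   [1 / (n + 1)^2] at each step, and tends to 0. *)
Definition wallis_quot (n : nat) : R := 2 * wallis_sqr n / wallis n.

Lemma wallis_quot_sub (n : nat) : wallis_quot n - wallis_quot (S n) = / (INR n + 1) ^ 2.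
Proof.
  unfold wallis_quot. assert (HA := wallis_rec n). assert (HB := wallis_sqr_rec n).
  assert (P0 := wallis_pos n). assert (P1 := wallis_pos (S n)). assert (HI := pos_INR n).
  replace (wallis n) with ((2 * INR n + 2) / (2 * INR n + 1) * wallis (S n))
    by (field_simplify_eq; lra).
  replace (wallis_sqr (S n))
    with (((INR n + 1) * (2 * INR n + 1) * wallis_sqr n - wallis (S n)) / (2 * (INR n + 1) ^ 2))
    by (field_simplify_eq; nra).
  field. lra.
Qed.

Lemma wallis_quot_bounds (n : nat) : 0 <= wallis_quot n <= 9 / (INR n + 1).
Proof.
  unfold wallis_quot. assert (HA := wallis_rec n). assert (HB := wallis_sqr_bounds n).
  assert (P0 := wallis_pos n). assert (HI := pos_INR n).
  replace (wallis (S n)) with ((2 * INR n + 1) / (2 * INR n + 2) * wallis n) in HB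
    by (field_simplify_eq; lra).
  split.
  - apply Rdiv_le_0_compat; lra.
  - apply (Rmult_le_reg_r (wallis n)); [lra|].
    replace (2 * wallis_sqr n / wallis n * wallis n) with (2 * wallis_sqr n) by (field; lra).
    replace (9 / (INR n + 1) * wallis n)
      with (2 * (9 * (wallis n - (2 * INR n + 1) / (2 * INR n + 2) * wallis n))) by (field; lra).
    lra.
Qed.

Lemma is_series_inv_sqr : is_series (fun n => / (INR n + 1) ^ 2) (PI ^ 2 / 6).
Proof.
  assert (Hsum : forall N, sum_n (fun n => / (INR n + 1) ^ 2) N = wallis_quot 0 - wallis_quot (S N)).
  { induction N as [|N IH].
    - rewrite sum_O, wallis_quot_sub. reflexivity.
    - rewrite sum_Sn, IH, <- wallis_quot_sub. unfold plus; simpl. ring. }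
  assert (H0 : wallis_quot 0 = PI ^ 2 / 6).
  { unfold wallis_quot. rewrite wallis_0, wallis_sqr_0. assert (HP := PI_RGT_0). field. lra. }
  assert (Hlim : is_lim_seq (fun N => 9 / (INR N + 1)) 0).
  { replace (Finite 0) with (Rbar_mult 9 (Rbar_inv p_infty)) by (simpl; f_equal; ring).
    apply (is_lim_seq_scal_l _ 9), is_lim_seq_inv; [|discriminate].
    eapply is_lim_seq_plus; [apply is_lim_seq_INR | apply is_lim_seq_const | reflexivity]. }
  change (is_lim_seq (sum_n (fun n => / (INR n + 1) ^ 2)) (PI ^ 2 / 6)).
  apply (is_lim_seq_ext (fun N => PI ^ 2 / 6 - wallis_quot (S N))).
  - intros N. rewrite Hsum, H0. reflexivity.
  - replace (Finite (PI ^ 2 / 6)) with (Finite (PI ^ 2 / 6 - 0)) by (f_equal; ring).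
    apply is_lim_seq_minus'; [apply is_lim_seq_const|].
    apply (is_lim_seq_incr_1 wallis_quot).
    apply (is_lim_seq_le_le (fun _ => 0) _ _ _ wallis_quot_bounds); [apply is_lim_seq_const | exact Hlim].
Qed.

Definition log1mexp (v : R) : R := ln (1 - exp (- v)).

Lemma log1mexp_bounds (v : R) : 0 < v -> - / (exp v - 1) <= log1mexp v < 0.
Proof.
  intros Hv. unfold log1mexp.
  assert (H1 := exp_opp_lt_1 v Hv). assert (H0 := exp_pos (- v)).
  assert (Hev : 1 < exp v) by (rewrite <- exp_0; apply exp_increasing; lra).
  split.
  - assert (Hk := exp_ineq1_le (/ (exp v - 1))).
    assert (0 < / (exp v - 1)) by (apply Rinv_0_lt_compat; lra).
    rewrite <- (ln_exp (- / (exp v - 1))). apply ln_le; [apply exp_pos|].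
    rewrite exp_Ropp, (exp_Ropp v).
    replace (1 - / exp v) with (/ (1 + / (exp v - 1))) by (field; lra).
    apply Rinv_le_contravar; lra.
  - rewrite <- ln_1. apply ln_increasing; lra.
Qed.

Lemma is_derive_log1mexp (v : R) : 0 < v -> is_derive log1mexp v (/ (exp v - 1)).
Proof.
  intros Hv. unfold log1mexp. assert (H1 := exp_opp_lt_1 v Hv).
  assert (Hev : 1 < exp v) by (rewrite <- exp_0; apply exp_increasing; lra).
  auto_derive; [lra|]. rewrite exp_Ropp. field. lra.
Qed.

Lemma is_derive_inv_exp_sub_1 (v : R) : 0 < v ->
  is_derive (fun v => / (exp v - 1)) v (- / (2 * sinh (v / 2)) ^ 2).
Proof.
  intros Hv. assert (Hlt := exp_opp_lt_1 v Hv). assert (Hinv := exp_mul_exp_opp v).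
  assert (Hsq : (2 * sinh (v / 2)) ^ 2 = exp v - 2 + exp (- v)).
  { assert (Hh := exp_mul_exp_opp (v / 2)).
    replace v with (v / 2 + v / 2) at 2 by field.
    replace (- v) with (- (v / 2) + - (v / 2)) by field.
    rewrite !exp_plus. unfold sinh. nra. }
  rewrite Hsq. auto_derive; [nra|]. rewrite exp_Ropp. field. split; nra.
Qed.

Lemma sqr_div_sinh_bounds (y w : R) : 0 < y -> 0 < w ->
  0 <= y ^ 2 / (2 * sinh (y * w / 2)) ^ 2 /\
  / w ^ 2 - y ^ 2 / 4 <= y ^ 2 / (2 * sinh (y * w / 2)) ^ 2 <= / w ^ 2.
Proof.
  intros Hy Hw. destruct (inv_sinh_half_sqr_bounds (y * w) ltac:(nra)) as [Hlo Hhi].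
  assert (Hsinh := sinh_ge_id (y * w / 2) ltac:(nra)).
  assert (Hy2 : 0 < y ^ 2) by (apply pow_lt; lra).
  replace (/ w ^ 2) with (y ^ 2 * / (y * w) ^ 2) by (field; lra).
  unfold Rdiv. split; [|split; [|apply Rmult_le_compat_l; lra]].
  - apply Rmult_le_pos; [lra|]. apply Rlt_le, Rinv_0_lt_compat, pow_lt. nra.
  - apply (Rmult_le_compat_l (y ^ 2)) in Hlo; lra.
Qed.

Lemma ex_series_log1mexp (y b : R) : 0 < y -> 0 < b ->
  ex_series (fun n => log1mexp (y * (INR n + b))).
Proof.
  intros Hy Hb.
  assert (Hyb : 1 < exp (y * b)) by (rewrite <- exp_0; apply exp_increasing; nra).
  apply (ex_series_le (V := R_CompleteNormedModule) _ (fun n => / (exp (y * b) - 1) * exp (- y) ^ n)).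
  - intros n. change norm with Rabs. assert (HI := pos_INR n).
    destruct (log1mexp_bounds (y * (INR n + b)) ltac:(nra)) as [Hlo Hhi].
    rewrite Rabs_left by lra.
    assert (Hn : 1 <= exp (y * INR n)) by (assert (H := exp_ineq1_le (y * INR n)); nra).
    rewrite <- exp_mul_INR, Ropp_mult_distr_l_reverse, exp_Ropp.
    assert (Hsplit : exp (y * (INR n + b)) = exp (y * b) * exp (y * INR n))
      by (rewrite <- exp_plus; f_equal; ring).
    rewrite Hsplit in Hlo.
    enough (/ (exp (y * b) * exp (y * INR n) - 1) <= / (exp (y * b) - 1) * / exp (y * INR n)) by lra.
    rewrite <- Rinv_mult. apply Rinv_le_contravar; nra.
  - apply (ex_series_scal_l (V := R_NormedModule)), ex_series_geom.
    assert (H := exp_opp_lt_1 y Hy). assert (H0 := exp_pos (- y)). rewrite Rabs_pos_eq; lra.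
Qed.

Lemma qpoch_inf_eq_exp (q c d : R) : 0 < q < 1 -> 0 < c -> 0 < d ->
  qpoch_inf q c d = exp (Series (fun n => log1mexp (- (d * ln q) * (INR n + c / d)))).
Proof.
  intros Hq Hc Hd.
  assert (Hl : ln q < 0) by (rewrite <- ln_1; apply ln_increasing; lra).
  set (y := - (d * ln q)). assert (Hy : 0 < y) by (unfold y; nra).
  set (t := fun n => log1mexp (y * (INR n + c / d))).
  assert (Hfactor : forall n, 1 - Rpower q (c + d * INR n) = exp (t n)).
  { intros n. unfold t, log1mexp, Rpower. assert (HI := pos_INR n).
    replace ((c + d * INR n) * ln q) with (- (y * (INR n + c / d))) by (unfold y; field; lra).
    rewrite exp_ln; [reflexivity|].
    assert (0 < c / d) by (apply Rdiv_lt_0_compat; lra). enough (exp (- (y * (INR n + c / d))) < 1) by lra.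
    apply exp_opp_lt_1. nra. }
  assert (Hpartial : forall N, qpoch_partial q c d (S N) = exp (sum_n t N)).
  { induction N as [|N IH].
    - change (qpoch_partial q c d 1) with (1 * (1 - Rpower q (c + d * INR 0))).
      rewrite sum_O, Hfactor. ring.
    - change (qpoch_partial q c d (S (S N)))
        with (qpoch_partial q c d (S N) * (1 - Rpower q (c + d * INR (S N)))).
      rewrite IH, sum_Sn, Hfactor, <- exp_plus. reflexivity. }
  assert (Hex : ex_series t) by (apply ex_series_log1mexp; [lra | apply Rdiv_lt_0_compat; lra]).
  assert (Hlim : is_lim_seq (fun N => qpoch_partial q c d (S N)) (exp (Series t))).
  { apply (is_lim_seq_ext (fun N => exp (sum_n t N))); [intros N; now rewrite Hpartial|].
    apply (is_lim_seq_continuous exp (sum_n t)); [apply derivable_continuous_pt, derivable_pt_exp|].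
    exact (Series_correct _ Hex). }
  unfold qpoch_inf. now rewrite <- Lim_seq_incr_1, (is_lim_seq_unique _ _ Hlim).
Qed.

(** * The remainder and its duplication formula *)

Definition log1mexp_pair (x c t : R) : R := log1mexp (x * (c + t)) + log1mexp (x * (c + 1 - t)).

(* [log_prod b x] is [ln ((q^b; q)_oo (q^(1-b); q)_oo)] for [q = exp (- x)]. *)
Definition log_prod (b x : R) : R := Series (fun n => log1mexp_pair x (INR n) b).

Definition log_prod_rem (b x : R) : R := log_prod b x - ln (2 * sin (b * PI)) + PI ^ 2 / (3 * x).

Lemma ex_series_log1mexp_pair (x t : R) : 0 < x -> 0 < t < 1 ->
  ex_series (fun n => log1mexp_pair x (INR n) t).
Proof.
  intros Hx Ht. apply (ex_series_plus (V := R_NormedModule)).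
  - apply ex_series_log1mexp; lra.
  - apply (ex_series_ext (fun n => log1mexp (x * (INR n + (1 - t))))).
    + intros n. unfold log1mexp. do 4 f_equal. ring.
    + apply ex_series_log1mexp; lra.
Qed.

Lemma log_prod_rem_sym (b x : R) : log_prod_rem (1 - b) x = log_prod_rem b x.
Proof.
  unfold log_prod_rem, log_prod.
  replace ((1 - b) * PI) with (PI - b * PI) by ring. rewrite sin_PI_x.
  do 2 f_equal. apply Series_ext. intros n. unfold log1mexp_pair.
  replace (INR n + 1 - (1 - b)) with (INR n + b) by ring.
  replace (INR n + (1 - b)) with (INR n + 1 - b) by ring. apply Rplus_comm.
Qed.

Lemma log_prod_dup (b x : R) : 0 < x -> 0 < b < 1 ->
  log_prod b x = log_prod (b / 2) (2 * x) + log_prod ((b + 1) / 2) (2 * x).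
Proof.
  intros Hx Hb. unfold log_prod.
  rewrite <- Series_plus by (apply ex_series_log1mexp_pair; lra).
  symmetry. apply is_series_unique.
  apply (is_series_ext (fun n => log1mexp_pair x (INR (2 * n)) b + log1mexp_pair x (INR (S (2 * n))) b));
    [|apply (is_series_pair_sum (fun k => log1mexp_pair x (INR k) b)), Series_correct,
        ex_series_log1mexp_pair; lra].
  intros n. unfold log1mexp_pair. rewrite S_INR, mult_INR. simpl (INR 2).
  replace (2 * x * (INR n + b / 2)) with (x * ((1 + 1) * INR n + b)) by field.
  replace (2 * x * (INR n + 1 - b / 2)) with (x * ((1 + 1) * INR n + 1 + 1 - b)) by field.
  replace (2 * x * (INR n + (b + 1) / 2)) with (x * ((1 + 1) * INR n + 1 + b)) by field.
  replace (2 * x * (INR n + 1 - (b + 1) / 2)) with (x * ((1 + 1) * INR n + 1 - b)) by field.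
  lra.
Qed.

Lemma log_prod_rem_dup (b x : R) : 0 < x -> 0 < b < 1 ->
  log_prod_rem b x = log_prod_rem (b / 2) (2 * x) + log_prod_rem ((b + 1) / 2) (2 * x).
Proof.
  intros Hx Hb. unfold log_prod_rem. rewrite (log_prod_dup b x Hx Hb).
  assert (HP := PI_RGT_0).
  assert (Hsin : 0 < sin (b / 2 * PI)) by (apply sin_gt_0; nra).
  assert (Hcos : sin ((b + 1) / 2 * PI) = cos (b / 2 * PI))
    by (rewrite cos_sin; f_equal; field).
  assert (Hcos0 : 0 < cos (b / 2 * PI)) by (apply cos_gt_0; nra).
  assert (Hdouble : sin (b * PI) = 2 * sin (b / 2 * PI) * cos (b / 2 * PI))
    by (rewrite <- sin_2a; f_equal; field).
  rewrite Hcos, Hdouble.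
  replace (2 * (2 * sin (b / 2 * PI) * cos (b / 2 * PI)))
    with ((2 * sin (b / 2 * PI)) * (2 * cos (b / 2 * PI))) by ring.
  rewrite ln_mult by lra. field. lra.
Qed.

Definition second_diff_bounded (g : R -> R) (K : R) : Prop :=
  forall m h, 0 <= h -> 0 < m - h -> m + h < 1 ->
    Rabs (g (m + h) + g (m - h) - 2 * g m) <= K * h ^ 2.

Lemma second_diff_bounded_of_deriv2 (f f1 f2 : R -> R) (K : R) :
  (forall t, 0 < t < 1 -> is_derive f t (f1 t)) ->
  (forall t, 0 < t < 1 -> is_derive f1 t (f2 t)) ->
  (forall t, 0 < t < 1 -> Rabs (f2 t) <= K) -> second_diff_bounded f K.
Proof. intros Hf Hf1 HK m h. now apply (Rabs_second_diff_le f f1 f2 0 1). Qed.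

Lemma second_diff_bounded_ext (f g : R -> R) (K : R) :
  (forall t, 0 < t < 1 -> f t = g t) -> second_diff_bounded f K -> second_diff_bounded g K.
Proof.
  intros Hfg Hf m h Hh H1 H2. rewrite <- !Hfg by lra. now apply Hf.
Qed.

Lemma second_diff_bounded_le (f : R -> R) (K K' : R) :
  K <= K' -> second_diff_bounded f K -> second_diff_bounded f K'.
Proof.
  intros HK Hf m h Hh H1 H2. specialize (Hf m h Hh H1 H2).
  assert (0 <= h ^ 2) by apply pow2_ge_0. nra.
Qed.

Lemma second_diff_bounded_ge0 (g : R -> R) (K : R) : second_diff_bounded g K -> 0 <= K.
Proof.
  intros Hg. specialize (Hg (1 / 2) (1 / 4) ltac:(lra) ltac:(lra) ltac:(lra)).
  assert (H := Rabs_pos (g (1 / 2 + 1 / 4) + g (1 / 2 - 1 / 4) - 2 * g (1 / 2))). nra.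
Qed.

Lemma second_diff_bounded_plus (f g : R -> R) (Kf Kg : R) :
  second_diff_bounded f Kf -> second_diff_bounded g Kg ->
  second_diff_bounded (fun t => f t + g t) (Kf + Kg).
Proof.
  intros Hf Hg m h Hh H1 H2.
  replace (f (m + h) + g (m + h) + (f (m - h) + g (m - h)) - 2 * (f m + g m))
    with ((f (m + h) + f (m - h) - 2 * f m) + (g (m + h) + g (m - h) - 2 * g m)) by ring.
  eapply Rle_trans; [apply Rabs_triang|].
  specialize (Hf m h Hh H1 H2). specialize (Hg m h Hh H1 H2). lra.
Qed.

Lemma second_diff_bounded_const (c : R) : second_diff_bounded (fun _ => c) 0.
Proof.
  intros m h _ _ _. replace (c + c - 2 * c) with 0 by ring. rewrite Rabs_R0. lra.
Qed.

Lemma second_diff_bounded_series (g : nat -> R -> R) (Kn : nat -> R) (K : R) :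
  (forall t, 0 < t < 1 -> ex_series (fun n => g n t)) ->
  (forall n, second_diff_bounded (g n) (Kn n)) -> is_series Kn K ->
  second_diff_bounded (fun t => Series (fun n => g n t)) K.
Proof.
  intros Hex Hg HK m h Hh H1 H2.
  set (d := fun n => g n (m + h) + g n (m - h) - 2 * g n m).
  assert (Hd : is_series d (Series (fun n => g n (m + h)) + Series (fun n => g n (m - h))
                           - 2 * Series (fun n => g n m))).
  { apply (is_series_minus (V := R_NormedModule)); [apply (is_series_plus (V := R_NormedModule))|].
    1, 2: apply Series_correct, Hex; lra.
    apply (is_series_scal_l (V := R_NormedModule)), Series_correct, Hex. lra. }
  assert (HKh : is_series (fun n => Kn n * h ^ 2) (K * h ^ 2)) by now apply is_series_scal_r.
  match goal with |- Rabs ?D <= _ =>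
    apply (is_lim_seq_le (fun N => Rabs (sum_n d N)) (sum_n (fun n => Kn n * h ^ 2)) (Rabs D) (K * h ^ 2))
  end.
  - intros N. rewrite !sum_n_Reals. eapply Rle_trans; [apply sum_f_R0_triangle|].
    apply sum_growing. intros n. now apply Hg.
  - apply (is_lim_seq_abs _ (Finite _)), Hd.
  - exact HKh.
Qed.

Definition log1mexp_pair_d1 (y c t : R) : R :=
  y / (exp (y * (c + t)) - 1) - y / (exp (y * (c + 1 - t)) - 1).

Definition log1mexp_pair_d2 (y c t : R) : R :=
  - (y ^ 2 / (2 * sinh (y * (c + t) / 2)) ^ 2) - y ^ 2 / (2 * sinh (y * (c + 1 - t) / 2)) ^ 2.

Lemma is_derive_log1mexp_pair (y c t : R) : 0 < y -> 0 <= c -> 0 < t < 1 ->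
  is_derive (log1mexp_pair y c) t (log1mexp_pair_d1 y c t).
Proof.
  intros Hy Hc Ht. unfold log1mexp_pair, log1mexp_pair_d1.
  replace (y / (exp (y * (c + t)) - 1) - y / (exp (y * (c + 1 - t)) - 1))
    with (y * / (exp (y * (c + t)) - 1) + - y * / (exp (y * (c + 1 - t)) - 1)) by (unfold Rdiv; ring).
  apply (is_derive_plus (fun t => log1mexp (y * (c + t))) (fun t => log1mexp (y * (c + 1 - t)))).
  - apply (is_derive_comp log1mexp (fun t => y * (c + t))); [apply is_derive_log1mexp; nra|].
    auto_derive; auto; ring.
  - apply (is_derive_comp log1mexp (fun t => y * (c + 1 - t))); [apply is_derive_log1mexp; nra|].
    auto_derive; auto; ring.
Qed.

Lemma is_derive_log1mexp_pair_d1 (y c t : R) : 0 < y -> 0 <= c -> 0 < t < 1 ->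
  is_derive (log1mexp_pair_d1 y c) t (log1mexp_pair_d2 y c t).
Proof.
  intros Hy Hc Ht. unfold log1mexp_pair_d1, log1mexp_pair_d2.
  assert (H1 : is_derive (fun t => / (exp (y * (c + t)) - 1)) t
                 (y * - / (2 * sinh (y * (c + t) / 2)) ^ 2)).
  { apply (is_derive_comp (fun v => / (exp v - 1)) (fun t => y * (c + t)));
      [apply is_derive_inv_exp_sub_1; nra | auto_derive; auto; ring]. }
  assert (H2 : is_derive (fun t => / (exp (y * (c + 1 - t)) - 1)) t
                 (- y * - / (2 * sinh (y * (c + 1 - t) / 2)) ^ 2)).
  { apply (is_derive_comp (fun v => / (exp v - 1)) (fun t => y * (c + 1 - t)));
      [apply is_derive_inv_exp_sub_1; nra | auto_derive; auto; ring]. }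
  apply (is_derive_ext (fun t => y * / (exp (y * (c + t)) - 1) - y * / (exp (y * (c + 1 - t)) - 1)));
    [intros s; unfold Rdiv; lra|].
  replace (- (y ^ 2 / (2 * sinh (y * (c + t) / 2)) ^ 2) - y ^ 2 / (2 * sinh (y * (c + 1 - t) / 2)) ^ 2)
    with (y * (y * - / (2 * sinh (y * (c + t) / 2)) ^ 2)
          - y * (- y * - / (2 * sinh (y * (c + 1 - t) / 2)) ^ 2)) by (unfold Rdiv; ring).
  apply (is_derive_minus (fun t => y * / (exp (y * (c + t)) - 1))
                         (fun t => y * / (exp (y * (c + 1 - t)) - 1)));
    apply is_derive_scal; assumption.
Qed.

Lemma Rabs_log1mexp_pair_d2_le (y c t : R) : 0 < y -> 1 <= c -> 0 < t < 1 ->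
  Rabs (log1mexp_pair_d2 y c t) <= 2 / c ^ 2.
Proof.
  intros Hy Hc Ht. unfold log1mexp_pair_d2.
  destruct (sqr_div_sinh_bounds y (c + t) Hy ltac:(lra)) as [H1 [_ H2]].
  destruct (sqr_div_sinh_bounds y (c + 1 - t) Hy ltac:(lra)) as [H3 [_ H4]].
  assert (Hc2 : 0 < c ^ 2) by (apply pow_lt; lra).
  assert (/ (c + t) ^ 2 <= / c ^ 2) by (apply Rinv_le_contravar, pow_incr; lra).
  assert (/ (c + 1 - t) ^ 2 <= / c ^ 2) by (apply Rinv_le_contravar, pow_incr; lra).
  rewrite Rabs_left1 by lra. unfold Rdiv at 3. lra.
Qed.

Lemma is_derive_ln_2_sin (t : R) : 0 < t < 1 ->
  is_derive (fun t => ln (2 * sin (t * PI))) t (PI * cos (t * PI) / sin (t * PI)).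
Proof.
  intros Ht. assert (Hs : 0 < sin (t * PI)) by (apply sin_gt_0; assert (HP := PI_RGT_0); nra).
  auto_derive; [lra|]. field. lra.
Qed.

Lemma is_derive_PI_cot (t : R) : 0 < t < 1 ->
  is_derive (fun t => PI * cos (t * PI) / sin (t * PI)) t (- (PI ^ 2 / sin (t * PI) ^ 2)).
Proof.
  intros Ht. assert (Hs : 0 < sin (t * PI)) by (apply sin_gt_0; assert (HP := PI_RGT_0); nra).
  assert (Hsc := sin2_cos2 (t * PI)). unfold Rsqr in Hsc.
  auto_derive; [lra|].
  replace (PI ^ 2) with (PI ^ 2 * (sin (t * PI) * sin (t * PI) + cos (t * PI) * cos (t * PI)))
    by (rewrite Hsc; ring).
  field. lra.
Qed.

Lemma Rabs_log1mexp_pair_d2_0_le (y t : R) : 1 <= y <= 2 -> 0 < t < 1 ->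
  Rabs (log1mexp_pair_d2 y 0 t + PI ^ 2 / sin (t * PI) ^ 2) <= 18.
Proof.
  intros Hy. revert t.
  assert (Hhalf : forall t, 0 < t <= 1 / 2 ->
            Rabs (log1mexp_pair_d2 y 0 t + PI ^ 2 / sin (t * PI) ^ 2) <= 18).
  { intros t Ht. unfold log1mexp_pair_d2. rewrite !Rplus_0_l.
    assert (HP := PI_RGT_0). assert (HP4 := PI_4).
    destruct (sqr_div_sinh_bounds y t ltac:(lra) ltac:(lra)) as [_ [H1 H2]].
    destruct (sqr_div_sinh_bounds y (1 - t) ltac:(lra) ltac:(lra)) as [H3 [_ H4]].
    destruct (inv_sin_sqr_bounds (t * PI) ltac:(nra)) as [H5 H6].
    assert (Hsin : PI ^ 2 / sin (t * PI) ^ 2 = / t ^ 2 + PI ^ 2 * (/ sin (t * PI) ^ 2 - / (t * PI) ^ 2))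
      by (assert (0 < sin (t * PI)) by (apply sin_gt_0; nra);
          field; repeat split; apply Rgt_not_eq; nra).
    assert (H7 : / (1 - t) ^ 2 <= 4)
      by (replace 4 with (/ (1 / 2) ^ 2) by field; apply Rinv_le_contravar, pow_incr; nra).
    assert (Hdiff : 0 <= / sin (t * PI) ^ 2 - / (t * PI) ^ 2 <= 1) by lra.
    assert (HP2 : 0 <= PI ^ 2 <= 16) by (split; nra).
    assert (0 <= PI ^ 2 * (/ sin (t * PI) ^ 2 - / (t * PI) ^ 2) <= PI ^ 2) by (split; nra).
    rewrite Hsin. apply Rabs_le_between. split; nra. }
  intros t Ht. destruct (Rle_lt_dec t (1 / 2)) as [Ht2 | Ht2]; [apply Hhalf; lra|].
  replace t with (1 - (1 - t)) by ring.
  replace ((1 - (1 - t)) * PI) with (PI - (1 - t) * PI) by ring. rewrite sin_PI_x.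
  replace (log1mexp_pair_d2 y 0 (1 - (1 - t))) with (log1mexp_pair_d2 y 0 (1 - t))
    by (unfold log1mexp_pair_d2; rewrite !Rplus_0_l; replace (1 - (1 - (1 - t))) with (1 - t) by ring;
        replace (1 - (1 - t)) with t by ring; ring).
  apply Hhalf. lra.
Qed.

Lemma log_prod_rem_split (t y : R) : 0 < y -> 0 < t < 1 ->
  log_prod_rem t y = (log1mexp_pair y 0 t - ln (2 * sin (t * PI)))
                     + Series (fun n => log1mexp_pair y (INR (S n)) t) + PI ^ 2 / (3 * y).
Proof.
  intros Hy Ht. unfold log_prod_rem, log_prod.
  rewrite Series_incr_1 by (apply ex_series_log1mexp_pair; lra). simpl (INR 0). ring.
Qed.

Lemma log_prod_rem_second_diff (y : R) : 1 <= y <= 2 ->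
  second_diff_bounded (fun t => log_prod_rem t y) 24.
Proof.
  intros Hy.
  apply (second_diff_bounded_ext
           (fun t => ((log1mexp_pair y 0 t - ln (2 * sin (t * PI)))
                      + Series (fun n => log1mexp_pair y (INR (S n)) t)) + PI ^ 2 / (3 * y)));
    [intros t Ht; symmetry; apply log_prod_rem_split; lra|].
  apply (second_diff_bounded_le _ ((18 + 2 * (PI ^ 2 / 6)) + 0));
    [assert (HP := PI_RGT_0); assert (HP4 := PI_4); nra|].
  apply second_diff_bounded_plus; [apply second_diff_bounded_plus | apply second_diff_bounded_const].
  - apply (second_diff_bounded_of_deriv2 _
             (fun t => log1mexp_pair_d1 y 0 t - PI * cos (t * PI) / sin (t * PI))
             (fun t => log1mexp_pair_d2 y 0 t + PI ^ 2 / sin (t * PI) ^ 2)); intros t Ht.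
    + apply (is_derive_minus (log1mexp_pair y 0)); [apply is_derive_log1mexp_pair; lra |].
      now apply is_derive_ln_2_sin.
    + replace (log1mexp_pair_d2 y 0 t + PI ^ 2 / sin (t * PI) ^ 2)
        with (log1mexp_pair_d2 y 0 t - - (PI ^ 2 / sin (t * PI) ^ 2)) by ring.
      apply (is_derive_minus (log1mexp_pair_d1 y 0)); [apply is_derive_log1mexp_pair_d1; lra |].
      now apply is_derive_PI_cot.
    + now apply Rabs_log1mexp_pair_d2_0_le.
  - apply (second_diff_bounded_series _ (fun n => 2 / (INR n + 1) ^ 2)).
    + intros t Ht. apply (ex_series_incr_1 (fun n => log1mexp_pair y (INR n) t)).
      apply ex_series_log1mexp_pair; lra.
    + intros n. rewrite <- S_INR.
      apply (second_diff_bounded_of_deriv2 _ (log1mexp_pair_d1 y (INR (S n)))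
               (log1mexp_pair_d2 y (INR (S n)))); intros t Ht.
      * apply is_derive_log1mexp_pair; [lra | apply pos_INR | exact Ht].
      * apply is_derive_log1mexp_pair_d1; [lra | apply pos_INR | exact Ht].
      * apply Rabs_log1mexp_pair_d2_le; [lra | | exact Ht].
        rewrite S_INR. assert (HI := pos_INR n). lra.
    + apply (is_series_scal_l (V := R_NormedModule) 2 _ _ is_series_inv_sqr).
Qed.

(** * Bootstrapping along the duplication formula *)

Section Duplication.

Variables (rem : R -> R -> R) (K : R).

Hypothesis rem_dup : forall b x, 0 < x -> 0 < b < 1 ->
  rem b x = rem (b / 2) (2 * x) + rem ((b + 1) / 2) (2 * x).

Hypothesis rem_sym : forall b x, 0 < x -> 0 < b < 1 -> rem (1 - b) x = rem b x.

Hypothesis rem_second_diff : forall y, 1 <= y <= 2 -> second_diff_bounded (fun t => rem t y) K.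

(* The first three hypotheses also hold for [rem + c / x] with any constant [c];
   the last one pins down [c]. *)
Hypothesis rem_half_small : forall eps, 0 < eps ->
  exists delta, 0 < delta /\ forall x, 0 < x < delta -> Rabs (x * rem (1 / 2) x) < eps.

Lemma second_diff_bounded_halve (x K' : R) : 0 < x ->
  second_diff_bounded (fun t => rem t (2 * x)) K' -> second_diff_bounded (fun t => rem t x) (K' / 2).
Proof.
  intros Hx HK m h Hh H1 H2.
  rewrite (rem_dup (m + h) x), (rem_dup (m - h) x), (rem_dup m x) by lra.
  assert (A1 := HK (m / 2) (h / 2) ltac:(lra) ltac:(lra) ltac:(lra)).
  assert (A2 := HK ((m + 1) / 2) (h / 2) ltac:(lra) ltac:(lra) ltac:(lra)).
  replace (m / 2 + h / 2) with ((m + h) / 2) in A1 by field.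
  replace (m / 2 - h / 2) with ((m - h) / 2) in A1 by field.
  replace ((m + 1) / 2 + h / 2) with ((m + h + 1) / 2) in A2 by field.
  replace ((m + 1) / 2 - h / 2) with ((m - h + 1) / 2) in A2 by field.
  match goal with |- Rabs ?e <= _ =>
    replace e with ((rem ((m + h) / 2) (2 * x) + rem ((m - h) / 2) (2 * x) - 2 * rem (m / 2) (2 * x))
      + (rem ((m + h + 1) / 2) (2 * x) + rem ((m - h + 1) / 2) (2 * x) - 2 * rem ((m + 1) / 2) (2 * x)))
      by ring
  end.
  eapply Rle_trans; [apply Rabs_triang|].
  replace (K' / 2 * h ^ 2) with (K' * (h / 2) ^ 2 + K' * (h / 2) ^ 2) by field. lra.
Qed.

Lemma second_diff_bounded_scale (j : nat) (y : R) : 1 <= y <= 2 ->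
  second_diff_bounded (fun t => rem t (y / 2 ^ j)) (K / 2 ^ j).
Proof.
  intros Hy. induction j as [|j IH].
  - simpl. rewrite !Rdiv_1_r. now apply rem_second_diff.
  - assert (Hp := pow_lt 2 j ltac:(lra)).
    replace (K / 2 ^ S j) with (K / 2 ^ j / 2) by (simpl; field; lra).
    apply second_diff_bounded_halve; [simpl; apply Rdiv_lt_0_compat; lra|].
    replace (2 * (y / 2 ^ S j)) with (y / 2 ^ j) by (simpl; field; lra). exact IH.
Qed.

Lemma Rabs_rem_sub_half (b x : R) : 0 < x <= 2 -> 0 < b < 1 ->
  Rabs (rem b x - rem (1 / 2) x) <= K / 8 * x.
Proof.
  intros Hx Hb. destruct (exists_pow2_scale x Hx) as [j [y [Hy ->]]].
  assert (HS := second_diff_bounded_scale j y Hy).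
  assert (HK := second_diff_bounded_ge0 _ _ (rem_second_diff y Hy)).
  assert (Hp := pow_lt 2 j ltac:(lra)).
  set (h := Rabs (b - 1 / 2)).
  assert (Hh : 0 <= h < 1 / 2) by (unfold h; split; [apply Rabs_pos | apply Rabs_def1; lra]).
  specialize (HS (1 / 2) h ltac:(lra) ltac:(lra) ltac:(lra)). cbv beta in HS.
  assert (Hpair : rem (1 / 2 + h) (y / 2 ^ j) + rem (1 / 2 - h) (y / 2 ^ j) = 2 * rem b (y / 2 ^ j)).
  { assert (Hx0 : 0 < y / 2 ^ j) by (apply Rdiv_lt_0_compat; lra).
    unfold h. destruct (Rle_lt_dec (1 / 2) b).
    - rewrite Rabs_pos_eq by lra.
      replace (1 / 2 - (b - 1 / 2)) with (1 - b) by lra. rewrite rem_sym by lra.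
      replace (1 / 2 + (b - 1 / 2)) with b by lra. ring.
    - rewrite Rabs_left by lra.
      replace (1 / 2 + - (b - 1 / 2)) with (1 - b) by lra. rewrite rem_sym by lra.
      replace (1 / 2 - - (b - 1 / 2)) with b by lra. ring. }
  rewrite Hpair in HS.
  replace (2 * rem b (y / 2 ^ j) - 2 * rem (1 / 2) (y / 2 ^ j))
    with (2 * (rem b (y / 2 ^ j) - rem (1 / 2) (y / 2 ^ j))) in HS by ring.
  rewrite Rabs_mult, (Rabs_pos_eq 2) in HS by lra.
  assert (K / 2 ^ j * h ^ 2 <= K / 2 ^ j * / 4)
    by (apply Rmult_le_compat_l; [apply Rdiv_le_0_compat; lra | nra]).
  assert (K / 2 ^ j * / 4 <= K / 2 ^ j * / 4 * y).
  { assert (0 <= K / 2 ^ j * / 4) by (apply Rmult_le_pos; [apply Rdiv_le_0_compat |]; lra). nra. }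
  replace (K / 8 * (y / 2 ^ j)) with (K / 2 ^ j * / 4 * y / 2) by (field; lra).
  lra.
Qed.

Lemma Rabs_rem_half_sub_double (x : R) : 0 < x <= 1 ->
  Rabs (rem (1 / 2) x - 2 * rem (1 / 2) (2 * x)) <= K / 2 * x.
Proof.
  intros Hx. rewrite (rem_dup (1 / 2) x) by lra.
  replace (1 / 2 / 2) with (1 / 4) by field. replace ((1 / 2 + 1) / 2) with (3 / 4) by field.
  assert (A1 := Rabs_rem_sub_half (1 / 4) (2 * x) ltac:(lra) ltac:(lra)).
  assert (A2 := Rabs_rem_sub_half (3 / 4) (2 * x) ltac:(lra) ltac:(lra)).
  replace (rem (1 / 4) (2 * x) + rem (3 / 4) (2 * x) - 2 * rem (1 / 2) (2 * x))
    with ((rem (1 / 4) (2 * x) - rem (1 / 2) (2 * x)) + (rem (3 / 4) (2 * x) - rem (1 / 2) (2 * x)))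
    by ring.
  eapply Rle_trans; [apply Rabs_triang|]. lra.
Qed.

Lemma Rabs_rem_half_scaled_step (y : R) (k : nat) : 1 <= y <= 2 ->
  Rabs (rem (1 / 2) (y / 2 ^ S k) / 2 ^ S k - rem (1 / 2) (y / 2 ^ k) / 2 ^ k) <= K / 4 * (/ 4) ^ k.
Proof.
  intros Hy. assert (HK := second_diff_bounded_ge0 _ _ (rem_second_diff y Hy)).
  assert (Hp := pow_lt 2 k ltac:(lra)). assert (Hp1 := pow_R1_Rle 2 k ltac:(lra)).
  assert (Hdiff := Rabs_rem_half_sub_double (y / 2 ^ S k)).
  simpl pow in *. replace (2 * (y / (2 * 2 ^ k))) with (y / 2 ^ k) in Hdiff by (field; lra).
  replace (rem (1 / 2) (y / (2 * 2 ^ k)) / (2 * 2 ^ k) - rem (1 / 2) (y / 2 ^ k) / 2 ^ k)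
    with ((rem (1 / 2) (y / (2 * 2 ^ k)) - 2 * rem (1 / 2) (y / 2 ^ k)) / (2 * 2 ^ k))
    by (field; lra).
  unfold Rdiv at 1. rewrite Rabs_mult, (Rabs_pos_eq (/ (2 * 2 ^ k)))
    by (apply Rlt_le, Rinv_0_lt_compat; lra).
  apply (Rle_trans _ (K / 2 * (y / (2 * 2 ^ k)) * / (2 * 2 ^ k))).
  - apply Rmult_le_compat_r; [apply Rlt_le, Rinv_0_lt_compat; lra|].
    apply Hdiff. split; [apply Rdiv_lt_0_compat; lra|].
    apply (Rmult_le_reg_r (2 * 2 ^ k)); [lra|].
    replace (y / (2 * 2 ^ k) * (2 * 2 ^ k)) with y by (field; lra). lra.
  - rewrite pow_inv.
    replace (K / 2 * (y / (2 * 2 ^ k)) * / (2 * 2 ^ k)) with (K / 4 * / 4 ^ k * (y / 2))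
      by (replace 4 with (2 * 2) by ring; rewrite Rpow_mult_distr; field; lra).
    assert (0 <= K / 4 * / 4 ^ k)
      by (apply Rmult_le_pos; [lra | apply Rlt_le, Rinv_0_lt_compat, pow_lt; lra]).
    nra.
Qed.

Lemma is_lim_seq_rem_half_scaled (y : R) : 1 <= y -> is_lim_seq (fun k => rem (1 / 2) (y / 2 ^ k) / 2 ^ k) 0.
Proof.
  intros Hy. apply is_lim_seq_spec. intros eps.
  destruct (rem_half_small eps (cond_pos eps)) as [delta [Hd Hsmall]].
  assert (Hscale := is_lim_seq_div_pow2 y). apply is_lim_seq_spec in Hscale.
  destruct (Hscale (mkposreal delta Hd)) as [N HN]. exists N. intros k Hk.
  specialize (HN k Hk). cbn [pos] in HN. rewrite Rminus_0_r in HN |- *.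
  assert (Hxk : 0 < y / 2 ^ k) by (apply Rdiv_lt_0_compat; [lra | apply pow_lt; lra]).
  rewrite Rabs_pos_eq in HN by lra.
  specialize (Hsmall (y / 2 ^ k) (conj Hxk HN)).
  replace (rem (1 / 2) (y / 2 ^ k) / 2 ^ k) with (y / 2 ^ k * rem (1 / 2) (y / 2 ^ k) * / y)
    by (field; split; [apply pow_nonzero |]; lra).
  rewrite Rabs_mult, (Rabs_pos_eq (/ y)) by (apply Rlt_le, Rinv_0_lt_compat; lra).
  assert (/ y <= 1) by (rewrite <- Rinv_1; apply Rinv_le_contravar; lra).
  assert (0 < / y) by (apply Rinv_0_lt_compat; lra).
  assert (0 <= Rabs (y / 2 ^ k * rem (1 / 2) (y / 2 ^ k))) by apply Rabs_pos. nra.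
Qed.

Lemma Rabs_rem_half_le (x : R) : 0 < x <= 2 -> Rabs (rem (1 / 2) x) <= K / 3 * x.
Proof.
  intros Hx. destruct (exists_pow2_scale x Hx) as [j [y [Hy ->]]].
  assert (HK := second_diff_bounded_ge0 _ _ (rem_second_diff y Hy)).
  assert (Hp := pow_lt 2 j ltac:(lra)).
  assert (Hv := Rabs_le_of_geom_diff (fun k => rem (1 / 2) (y / 2 ^ k) / 2 ^ k) (K / 4) (/ 4)
                  ltac:(lra) (fun k => Rabs_rem_half_scaled_step y k Hy)
                  (is_lim_seq_rem_half_scaled y (proj1 Hy)) j).
  cbv beta in Hv. unfold Rdiv at 1 in Hv.
  rewrite Rabs_mult, (Rabs_pos_eq (/ 2 ^ j)) in Hv by (apply Rlt_le, Rinv_0_lt_compat; lra).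
  rewrite pow_inv in Hv. replace 4 with (2 * 2) in Hv by ring.
  rewrite Rpow_mult_distr in Hv.
  apply (Rmult_le_compat_r (2 ^ j)) in Hv; [|lra].
  rewrite Rmult_assoc, Rinv_l, Rmult_1_r in Hv by lra.
  eapply Rle_trans; [exact Hv|].
  replace (K / (2 * 2) * / (2 ^ j * 2 ^ j) / (1 - / (2 * 2)) * 2 ^ j) with (K / 3 * (1 / 2 ^ j))
    by (field; lra).
  apply Rmult_le_compat_l; [lra|]. unfold Rdiv.
  apply Rmult_le_compat_r; [apply Rlt_le, Rinv_0_lt_compat|]; lra.
Qed.

Lemma Rabs_rem_le (b x : R) : 0 < x <= 2 -> 0 < b < 1 -> Rabs (rem b x) <= K * x.
Proof.
  intros Hx Hb.
  assert (HK := second_diff_bounded_ge0 _ _ (rem_second_diff 1 ltac:(lra))).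
  assert (A := Rabs_rem_sub_half b x Hx Hb). assert (B := Rabs_rem_half_le x Hx).
  replace (rem b x) with ((rem b x - rem (1 / 2) x) + rem (1 / 2) x) by ring.
  eapply Rle_trans; [apply Rabs_triang|]. nra.
Qed.

End Duplication.

(** * The leading constant *)

Section HalfDefect.

Variable x : R.

Hypothesis x_pos : 0 < x.

Let u (n : nat) : R := exp (- (x * (INR n + 1 / 2))).

Let s (k : nat) : R := x * INR (S k) / 2.

Let s_pos (k : nat) : 0 < s k.
Proof. unfold s. assert (0 < INR (S k)) by (apply lt_0_INR; lia). nra. Qed.

Lemma is_series_half_cols (k : nat) :
  is_series (fun n => u n ^ S k / INR (S k)) (/ (INR (S k) * (2 * sinh (s k)))).
Proof.
  assert (Hs := s_pos k). assert (HI : 0 < INR (S k)) by (apply lt_0_INR; lia).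
  assert (Hq : 0 <= exp (- (2 * s k)) < 1)
    by (split; [apply Rlt_le, exp_pos | apply exp_opp_lt_1; lra]).
  assert (G := is_series_geom (exp (- (2 * s k))) ltac:(rewrite Rabs_pos_eq; lra)).
  apply (is_series_scal_l (V := R_NormedModule) (exp (- s k) / INR (S k))) in G.
  assert (Hval : exp (- s k) / INR (S k) * / (1 - exp (- (2 * s k)))
                 = / (INR (S k) * (2 * sinh (s k)))).
  { unfold sinh. assert (He : 1 < exp (s k)) by (rewrite <- exp_0; apply exp_increasing; lra).
    replace (- (2 * s k)) with (- s k + - s k) by ring. rewrite exp_plus, exp_Ropp.
    assert (0 < / exp (s k) < 1)
      by (split; [apply Rinv_0_lt_compat | rewrite <- Rinv_1; apply Rinv_lt_contravar]; lra).
    field. repeat split; nra. }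
  assert (Hterm : forall n, exp (- s k) / INR (S k) * exp (- (2 * s k)) ^ n = u n ^ S k / INR (S k)).
  { intros n. unfold u. rewrite <- !exp_mul_INR.
    replace (- (x * (INR n + 1 / 2)) * INR (S k)) with (- s k + - (2 * s k) * INR n)
      by (unfold s; field).
    rewrite exp_plus. field. lra. }
  rewrite <- Hval. exact (is_series_ext _ _ _ Hterm G).
Qed.

Lemma is_series_half_col_sums :
  is_series (fun k => / (INR (S k) * (2 * sinh (s k))))
    (- Series (fun n => log1mexp (x * (INR n + 1 / 2)))).
Proof.
  assert (Hu : forall n, 0 < u n < 1).
  { intros n. unfold u. split; [apply exp_pos | apply exp_opp_lt_1].
    assert (HI := pos_INR n). nra. }
  apply (is_series_swap_nonneg (fun n k => u n ^ S k / INR (S k))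
           (fun n => - log1mexp (x * (INR n + 1 / 2)))).
  - intros n k. apply Rdiv_le_0_compat; [apply pow_le; specialize (Hu n); lra | apply lt_0_INR; lia].
  - intros n. unfold log1mexp. fold (u n).
    apply is_series_ln_1_sub. specialize (Hu n). lra.
  - exact is_series_half_cols.
  - apply (is_series_opp (V := R_NormedModule)), Series_correct, ex_series_log1mexp; lra.
Qed.

Lemma is_series_half_defect :
  is_series (fun k => (1 - s k / sinh (s k)) / (INR k + 1) ^ 2)
    ((x * log_prod_rem (1 / 2) x + x * ln 2) / 2).
Proof.
  assert (Hprod : log_prod (1 / 2) x = 2 * Series (fun n => log1mexp (x * (INR n + 1 / 2)))).
  { unfold log_prod. rewrite <- Series_scal_l. apply Series_ext. intros n.
    unfold log1mexp_pair. replace (INR n + 1 - 1 / 2) with (INR n + 1 / 2) by field. ring. }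
  assert (Hrem : (x * log_prod_rem (1 / 2) x + x * ln 2) / 2
                 = PI ^ 2 / 6 - x * - Series (fun n => log1mexp (x * (INR n + 1 / 2)))).
  { unfold log_prod_rem. rewrite Hprod.
    replace (1 / 2 * PI) with (PI / 2) by field. rewrite sin_PI2, Rmult_1_r. field. lra. }
  rewrite Hrem.
  assert (Hterm : forall k, / (INR k + 1) ^ 2 - x * / (INR (S k) * (2 * sinh (s k)))
                            = (1 - s k / sinh (s k)) / (INR k + 1) ^ 2).
  { intros k. assert (Hs := s_pos k). assert (Hsinh := sinh_ge_id (s k) (Rlt_le _ _ Hs)).
    unfold s in *. rewrite S_INR in *. assert (HI := pos_INR k). field. split; lra. }
  apply (is_series_ext _ _ _ Hterm).
  apply (is_series_minus (V := R_NormedModule)); [exact is_series_inv_sqr|].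
  apply (is_series_scal_l (V := R_NormedModule)), is_series_half_col_sums.
Qed.

End HalfDefect.

Lemma half_defect_term_bounds (x : R) (k : nat) : 0 < x ->
  let d := (1 - x * INR (S k) / 2 / sinh (x * INR (S k) / 2)) / (INR k + 1) ^ 2 in
  0 <= d <= / (INR k + 1) ^ 2 /\ d <= x / 2.
Proof.
  intros Hx d. unfold d. rewrite S_INR. assert (HI := pos_INR k).
  assert (Hk2 : 0 < (INR k + 1) ^ 2) by (apply pow_lt; lra).
  destruct (one_sub_div_sinh_bounds (x * (INR k + 1) / 2) ltac:(nra)) as [H0 Hmin].
  assert (H1 := Rmin_l 1 (x * (INR k + 1) / 2)). assert (H2 := Rmin_r 1 (x * (INR k + 1) / 2)).
  split; [split|].
  - apply Rdiv_le_0_compat; lra.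
  - unfold Rdiv at 1. rewrite <- (Rmult_1_l (/ (INR k + 1) ^ 2)) at 2.
    apply Rmult_le_compat_r; [apply Rlt_le, Rinv_0_lt_compat|]; lra.
  - apply (Rmult_le_reg_r ((INR k + 1) ^ 2)); [lra|].
    unfold Rdiv at 1. rewrite Rmult_assoc, Rinv_l, Rmult_1_r by lra. nra.
Qed.

Lemma log_prod_rem_half_small (eps : R) : 0 < eps ->
  exists delta, 0 < delta /\ forall x, 0 < x < delta -> Rabs (x * log_prod_rem (1 / 2) x) < eps.
Proof.
  intros Heps.
  assert (Hb : is_lim_seq (sum_n (fun n => / (INR n + 1) ^ 2)) (PI ^ 2 / 6)) by exact is_series_inv_sqr.
  apply is_lim_seq_spec in Hb.
  destruct (Hb (mkposreal (eps / 8) ltac:(lra))) as [N HN]. specialize (HN N (le_n N)). cbn [pos] in HN.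
  apply Rabs_lt_between in HN.
  assert (HI : 1 <= INR (S N)) by (rewrite S_INR; assert (H := pos_INR N); lra).
  exists (eps / (2 * INR (S N))). split; [apply Rdiv_lt_0_compat; lra|].
  intros x [Hx Hxd].
  assert (Hxd' : INR (S N) * x < eps / 2).
  { apply (Rmult_lt_compat_l (INR (S N))) in Hxd; [|lra].
    replace (INR (S N) * (eps / (2 * INR (S N)))) with (eps / 2) in Hxd by (field; lra). lra. }
  assert (Hdefect := is_series_half_defect x Hx).
  assert (Hup := is_series_le_head_tail _ _ (x / 2) _ _ N
                   (fun k => proj1 (half_defect_term_bounds x k Hx))
                   (fun k => proj2 (half_defect_term_bounds x k Hx)) Hdefect is_series_inv_sqr).
  assert (Hlow := is_series_ge0 _ _ (fun k => proj1 (proj1 (half_defect_term_bounds x k Hx))) Hdefect).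
  assert (Hln := ln_2_lt_1). assert (Hln0 : 0 < ln 2) by (rewrite <- ln_1; apply ln_increasing; lra).
  apply Rabs_def1; nra.
Qed.

Lemma log_prod_rem_bound (b x : R) : 0 < x <= 2 -> 0 < b < 1 -> Rabs (log_prod_rem b x) <= 24 * x.
Proof.
  exact (Rabs_rem_le log_prod_rem 24 log_prod_rem_dup (fun b x _ _ => log_prod_rem_sym b x)
           log_prod_rem_second_diff log_prod_rem_half_small b x).
Qed.

Lemma ln_qpoch_inf_pair_sub (q a b : R) : 0 < q < 1 -> 0 < a -> 0 < b ->
  ln (qpoch_inf q a (a + b) * qpoch_inf q b (a + b))
  - (PI ^ 2 / (3 * (a + b) * ln q) + ln (2 * sin (a / (a + b) * PI)))
  = log_prod_rem (a / (a + b)) (- ((a + b) * ln q)).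
Proof.
  intros Hq Ha Hb.
  assert (Hl : ln q < 0) by (rewrite <- ln_1; apply ln_increasing; lra).
  rewrite !qpoch_inf_eq_exp by lra. rewrite ln_mult, !ln_exp by apply exp_pos.
  unfold log_prod_rem, log_prod, log1mexp_pair.
  rewrite <- Series_plus by (apply ex_series_log1mexp; [nra | apply Rdiv_lt_0_compat; lra]).
  rewrite (Series_ext _ (fun n => log1mexp (- ((a + b) * ln q) * (INR n + a / (a + b)))
                                  + log1mexp (- ((a + b) * ln q) * (INR n + 1 - a / (a + b))))).
  - field. split; lra.
  - intros n. replace (INR n + 1 - a / (a + b)) with (INR n + b / (a + b)) by (field; lra).
    reflexivity.
Qed.

Theorem mainTheorem7 (a b : R) (ha : 0 < a) (hb : 0 < b) :
  exists (C delta : R), 0 < delta /\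
    forall q : R, 0 < q -> 1 - delta < q -> q < 1 ->
      Rabs ( ln (qpoch_inf q a (a + b) * qpoch_inf q b (a + b))
             - ( PI ^ 2 / (3 * (a + b) * ln q)
                 + ln (2 * sin (a / (a + b) * PI)) ) )
      <= C * Rabs (ln q).
Proof.
  exists (24 * (a + b)), (1 - exp (- (2 / (a + b)))). split.
  { assert (exp (- (2 / (a + b))) < 1) by (apply exp_opp_lt_1, Rdiv_lt_0_compat; lra). lra. }
  intros q Hq0 Hq1 Hq2.
  assert (Hl : ln q < 0) by (rewrite <- ln_1; apply ln_increasing; lra).
  assert (Hlq : - (2 / (a + b)) < ln q)
    by (rewrite <- (ln_exp (- (2 / (a + b)))); apply ln_increasing; [apply exp_pos | lra]).
  assert (Hab : (a + b) * (2 / (a + b)) = 2) by (field; lra).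
  assert (Ha' : 0 < a / (a + b)) by (apply Rdiv_lt_0_compat; lra).
  assert (Hb' : 0 < b / (a + b)) by (apply Rdiv_lt_0_compat; lra).
  assert (Hsum : a / (a + b) + b / (a + b) = 1) by (field; lra).
  rewrite ln_qpoch_inf_pair_sub, (Rabs_left (ln q)) by lra.
  replace (24 * (a + b) * - ln q) with (24 * - ((a + b) * ln q)) by ring.
  apply log_prod_rem_bound; split; nra.
Qed.
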